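(* For $\epsilon\in[0,1)$ define sequences $\{p_j(\epsilon)\}_{j\in\mathbb N}$ and $\{p'_j(\epsilon)\}_{j\in\mathbb N}$ by $p_1(\epsilon)=2+\epsilon$, $p'_1(\epsilon)=1+\epsilon$, $p_{j+1}(\epsilon)=2+\epsilon-1/p_j(\epsilon)$, $p'_{j+1}(\epsilon)=2+\epsilon-1/p'_j(\epsilon)$, and let $p_+(\epsilon)=1+\epsilon/2+\sqrt{\epsilon+\epsilon^2/4}$. For $l\in\mathbb N$ let $M(l)$ be the $l\times l$ matrix with entries $2\delta_{i_1i_2}-1_{\{|i_1-i_2|=1\}}$ and $I_l$ the identity. Then: 1. $1\le p'_j(\epsilon)\le p_+(\epsilon)<p_j(\epsilon)\le1+1/j+j\epsilon$ for all $j\in\mathbb N$; $\{p_j(\epsilon)\}_j$ is monotone decreasing and $\{p'_j(\epsilon)\}_j$ is monotone nondecreasing. 2. For every $l\in\mathbb N$, the sequence $\{((\epsilon I_l+M(l))^{-1})_{kk}\}_{k=1}^{[l/2]}$ is monotone increasing. 3. For $j\ge2$, $p_j(\epsilon)-p_+(\epsilon)\le(1+\sqrt\epsilon)^{-(j-2)}$ and $p_+(\epsilon)-p'_j(\epsilon)\le\sqrt\epsilon(1+\sqrt\epsilon)^{-(j-2)}$. 4. For every $k\ge2$, $\prod_{j=1}^kp'_j(\epsilon)=(p_k(\epsilon)-1)\prod_{j=1}^{k-1}p_j(\epsilon)$. *)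

From HB Require Import structures.
From mathcomp Require Import all_boot all_order all_algebra.
From mathcomp Require Import reals.
Set Implicit Arguments. Unset Strict Implicit. Unset Printing Implicit Defensive.
Import Order.TTheory GRing.Theory Num.Theory.
Local Open Scope ring_scope.

(* p_aux eps n = p_{n+1}(eps): p_1 = 2+eps, p_{j+1} = 2+eps - 1/p_j *)
Fixpoint p_aux (R : realType) (eps : R) (n : nat) : R :=
  match n with
  | 0 => 2 + eps
  | n'.+1 => 2 + eps - (p_aux eps n')^-1
  end.

(* p'_aux eps n = p'_{n+1}(eps): p'_1 = 1+eps, p'_{j+1} = 2+eps - 1/p'_j *)
Fixpoint p'_aux (R : realType) (eps : R) (n : nat) : R :=
  match n with
  | 0 => 1 + eps
  | n'.+1 => 2 + eps - (p'_aux eps n')^-1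
  end.

(* 1-based indexing: p eps j = p_j(eps) for j >= 1 (value at j = 0 is junk) *)
Definition p (R : realType) (eps : R) (j : nat) : R := p_aux eps j.-1.
Definition p' (R : realType) (eps : R) (j : nat) : R := p'_aux eps j.-1.

Definition p_plus (R : realType) (eps : R) : R :=
  1 + eps / 2 + Num.sqrt (eps + eps ^+ 2 / 4).

Definition Mmat (R : realType) (l : nat) : 'M[R]_l :=
  \matrix_(i1 < l, i2 < l)
    ((2 * (i1 == i2)%:R) - ((`|(i1 : int) - (i2 : int)|%N == 1%N)%:R)).

From HB Require Import structures.
From mathcomp Require Import all_boot all_order all_algebra.
From mathcomp Require Import reals.
From mathcomp Require Import ring lra zify.
Import Order.TTheory GRing.Theory Num.Theory.
Local Open Scope ring_scope.

(* Put c = 2 + eps and let T_n be the Chebyshev-type numbers T_0 = 0, T_1 = 1,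
   T_(n+2) = c T_(n+1) - T_n.  Then p_j = T_(j+1) / T_j and
   p'_j = (T_(j+1) - T_j) / (T_j - T_(j-1)), so both products in 4. telescope.
   The inverse of eps I + M(l) is the Green matrix
   T_(min(i,j)+1) T_(l-max(i,j)) / T_(l+1), and its diagonal increases on the
   first half by the Cassini-type identity
   T_(a+1) T_(a+d+1) - T_a T_(a+d+2) = T_(d+1).
   Finally p_+ is the fixed point of f(t) = 2 + eps - 1/t; since
   f(a) - f(b) = (a - b)/(ab), the map f contracts by the factor 1 + sqrt eps
   between points of [1, +oo) whose product is at least 1 + sqrt eps, which
   gives the monotonicity, the bounds and the geometric rates. *)

Fixpoint cheb {R : pzRingType} (c : R) (n : nat) : R :=
  match n with
  | 0 => 0
  | 1 => 1
  | (n'.+1 as m).+1 => c * cheb c m - cheb c n'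
  end.

Arguments cheb : simpl never.

Section ChebyshevIdentities.
Context {R : comPzRingType} (c : R).

Lemma cheb0 : cheb c 0 = 0. Proof. by []. Qed.
Lemma cheb1 : cheb c 1 = 1. Proof. by []. Qed.
Lemma chebSS n : cheb c n.+2 = c * cheb c n.+1 - cheb c n. Proof. by []. Qed.

Lemma cheb_cassini a d :
  cheb c a.+1 * cheb c (a + d).+1 - cheb c a * cheb c (a + d).+2 = cheb c d.+1.
Proof.
elim: a => [|a IH]; first by rewrite add0n cheb0 cheb1; ring.
rewrite addSn chebSS [cheb c (a + d).+3]chebSS -IH; ring.
Qed.

Lemma chebD m n : cheb c m.+1 * cheb c n.+1 - cheb c m * cheb c n = cheb c (m + n).+1.
Proof.
elim: m n => [|m IH] n; first by rewrite add0n cheb0 cheb1; ring.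
rewrite addSn -addnS -IH chebSS chebSS; ring.
Qed.

End ChebyshevIdentities.

Section ChebyshevGrowth.
Context {R : realFieldType} {c : R}.
Hypothesis c_ge2 : 2 <= c.

Lemma cheb_ge0_incr n : 0 <= cheb c n /\ cheb c n + 1 <= cheb c n.+1.
Proof.
elim: n => [|n [T_ge0 T_incr]]; first by rewrite cheb0 cheb1; lra.
have : 2 * cheb c n.+1 <= c * cheb c n.+1 by rewrite ler_wpM2r //; lra.
rewrite chebSS; lra.
Qed.

Lemma cheb_gt0 n : 0 < cheb c n.+1.
Proof. by have [] := cheb_ge0_incr n; lra. Qed.

Lemma chebS_neq0 n : cheb c n.+1 != 0.
Proof. by rewrite gt_eqF ?cheb_gt0. Qed.

Lemma cheb_diff_neq0 n : cheb c n.+1 - cheb c n != 0.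
Proof. by apply/eqP; have [] := cheb_ge0_incr n; lra. Qed.

End ChebyshevGrowth.

Section ChebyshevGreen.
Context {R : comPzRingType} (c : R) {l k : nat}.
Hypothesis lt_kl : (k < l)%N.

Let g i := cheb c (minn i k).+1 * cheb c (l - maxn i k).

(* The last term stands for [0 < i] g (i - 1): it vanishes at i = 0, where
   the truncated i.-1 would not. *)
Lemma cheb_green_recurrence i : (i < l)%N ->
  c * g i - g i.+1 - cheb c (minn i k.+1) * cheb c (l - maxn i.-1 k)
  = (i == k)%:R * cheb c l.+1.
Proof.
move=> lt_il; rewrite /g.
have [lt_ik|[lt_ki|<-]] : (i < k \/ k < i \/ i = k)%N by lia.
- have -> : minn i k = i by lia.
  have -> : minn i.+1 k = i.+1 by lia.
  have -> : minn i k.+1 = i by lia.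
  have -> : maxn i k = k by lia.
  have -> : maxn i.+1 k = k by lia.
  have -> : maxn i.-1 k = k by lia.
  by rewrite (ltn_eqF lt_ik) chebSS /= mul0r; ring.
- have -> : minn i k = k by lia.
  have -> : minn i.+1 k = k by lia.
  have -> : minn i k.+1 = k.+1 by lia.
  have -> : (l - maxn i k = (l - i.+1).+1)%N by lia.
  have -> : (l - maxn i.+1 k = l - i.+1)%N by lia.
  have -> : (l - maxn i.-1 k = (l - i.+1).+2)%N by lia.
  by rewrite (gtn_eqF lt_ki) chebSS /= mul0r; ring.
- have -> : minn i i.+1 = i by lia.
  have -> : minn i.+1 i = i by lia.
  have -> : (l - maxn i i = (l - i.+1).+1)%N by lia.
  have -> : (l - maxn i.+1 i = l - i.+1)%N by lia.
  have -> : (l - maxn i.-1 i = (l - i.+1).+1)%N by lia.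
  have -> : cheb c l.+1 = cheb c (i + (l - i.+1).+1).+1 by congr (cheb c _); lia.
  by rewrite minnn eqxx mul1r -chebD chebSS; ring.
Qed.

End ChebyshevGreen.

Definition cheb_green {R : fieldType} (c : R) (l : nat) : 'M[R]_l :=
  \matrix_(i < l, j < l) (cheb c (minn i j).+1 * cheb c (l - maxn i j) / cheb c l.+1).

Lemma cheb_green_diag_incr (R : realFieldType) (c : R) (l : nat) : 2 <= c ->
  {in gtn l./2 &, {homo (fun n => cheb c n.+1 * cheb c (l - n)) : m n / (m < n)%N >-> m < n}}.
Proof.
move=> c_ge2; apply: Order.NatMonotonyTheory.homo_ltn_lt_in.
  by move=> m n _; rewrite !inE => lt_n2 o /andP[_ lt_on]; exact: ltn_trans lt_n2.
move=> n _; rewrite inE => lt_n1.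
have := cheb_cassini c n.+1 (l - n.*2 - 3).
have -> : (n.+1 + (l - n.*2 - 3)).+1 = (l - n.+1)%N by lia.
have -> : (l - n.+1).+1 = (l - n)%N by lia.
have := cheb_gt0 c_ge2 (l - n.*2 - 3).
lra.
Qed.

Lemma sum_nat_indicator (R : nzSemiRingType) (F : nat -> R) (m l : nat) :
  \sum_(0 <= j < l) (j == m)%:R * F j = (m < l)%:R * F m.
Proof.
elim: l => [|l IH]; first by rewrite big_geq // mul0r.
rewrite big_nat_recr //= IH.
have [lt_ml|lt_lm|->] := ltngtP m l.
- by rewrite ltnW //= mul0r addr0.
- by rewrite ltnS leqNgt lt_lm /= !mul0r addr0.
- by rewrite leqnn /= mul0r add0r.
Qed.

Section TridiagonalInverse.
Context {R : realType} (eps : R) {l : nat}.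

Lemma tridiag_entry (i j : 'I_l) :
  (eps%:M + Mmat R l) i j = (2 + eps) * (j == i :> nat)%:R - (j == i.+1 :> nat)%:R
     - ((0 < i)%N && (j == i.-1 :> nat))%:R.
Proof.
rewrite !mxE distn_eq1 [(j == i :> nat)]eq_sym -[(i == j)]/(val i == val j).
have [lt_ij|lt_ji|eq_ij] := ltngtP i j.
- rewrite [(i.+1 == j)]eq_sym.
  have -> : (0 < i)%N && (j == i.-1 :> nat) = false by apply/negbTE/negP; lia.
  rewrite /= ?mulr0n ?mulr1n ?mulr0 ?mulr1; lra.
- have -> : (j == i.+1 :> nat) = false by apply/negbTE/negP; lia.
  have -> : (i == j.+1 :> nat) = (0 < i)%N && (j == i.-1 :> nat).
    by apply/eqP/andP; [move=> ->|case=> ? /eqP ->]; lia.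
  rewrite /= ?mulr0n ?mulr1n ?mulr0 ?mulr1; lra.
- have -> : (j == i.+1 :> nat) = false by apply/negbTE/negP; lia.
  have -> : (i == j.+1 :> nat) = false by apply/negbTE/negP; lia.
  have -> : (0 < i)%N && (j == i.-1 :> nat) = false by apply/negbTE/negP; lia.
  rewrite /= ?mulr0n ?mulr1n ?mulr0 ?mulr1; lra.
Qed.

Lemma tridiag_row_action (i : 'I_l) (F : nat -> R) :
  \sum_(j < l) (eps%:M + Mmat R l) i j * F j =
  (2 + eps) * F i - (i.+1 < l)%:R * F i.+1 - (0 < i)%:R * F i.-1.
Proof.
transitivity (\sum_(0 <= j < l) ((2 + eps) * ((j == i)%:R * F j) - (j == i.+1)%:R * F j
    - (0 < i)%:R * ((j == i.-1)%:R * F j))).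
  rewrite big_mkord; apply: eq_bigr => j _; rewrite tridiag_entry.
  by case: (0 < i)%N => /=; ring.
rewrite !sumrB -!mulr_sumr !sum_nat_indicator ltn_ord.
have -> : (i.-1 < l)%N by have := ltn_ord i; lia.
by rewrite /=; ring.
Qed.

Hypothesis eps_ge0 : 0 <= eps.

Lemma mulmx_tridiag_green : (eps%:M + Mmat R l) *m cheb_green (2 + eps) l = 1%:M.
Proof.
have c_ge2 : 2 <= 2 + eps by rewrite lerDl.
set T := cheb (2 + eps).
apply/matrixP => i k; rewrite !mxE.
under eq_bigr => j _ do rewrite [cheb_green _ _ _ _]mxE.
rewrite (tridiag_row_action i (fun a => T (minn a k).+1 * T (l - maxn a k)%N / T l.+1)) /=.
have -> : (i.+1 < l)%:R * (T (minn i.+1 k).+1 * T (l - maxn i.+1 k)%N / T l.+1)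
    = T (minn i.+1 k).+1 * T (l - maxn i.+1 k)%N / T l.+1.
  case: ltnP => [_|le_li]; first by rewrite mul1r.
  have -> : (l - maxn i.+1 k = 0)%N by lia.
  by rewrite /T cheb0 mulr0 !mul0r.
have -> : (0 < i)%:R * (T (minn i.-1 k).+1 * T (l - maxn i.-1 k)%N / T l.+1)
    = T (minn i k.+1) * T (l - maxn i.-1 k)%N / T l.+1.
  case: (posnP i) => [->|i_gt0]; first by rewrite /T /= cheb0 !mul0r.
  by rewrite /= mul1r; congr (T _ * _ / _); lia.
rewrite -[(i == k)%:R](mulfK (chebS_neq0 c_ge2 l)).
rewrite -(cheb_green_recurrence _ (ltn_ord k) _ (ltn_ord i)).
by rewrite /T; field; rewrite chebS_neq0.
Qed.

Lemma invmx_tridiag : invmx (eps%:M + Mmat R l) = cheb_green (2 + eps) l.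
Proof.
have [unitA _] := mulmx1_unit mulmx_tridiag_green.
by rewrite -[invmx _]mulmx1 -mulmx_tridiag_green mulmxA mulVmx // mul1mx.
Qed.

Lemma invmx_tridiag_diag_incr (i j : 'I_l) : (i < j)%N -> (j < l./2)%N ->
  invmx (eps%:M + Mmat R l) i i < invmx (eps%:M + Mmat R l) j j.
Proof.
move=> lt_ij lt_j2; have c_ge2 : 2 <= 2 + eps by rewrite lerDl.
rewrite invmx_tridiag !mxE !minnn !maxnn ltr_pM2r ?invr_gt0 ?cheb_gt0 //.
by apply: cheb_green_diag_incr => //; rewrite inE //; exact: ltn_trans lt_j2.
Qed.

End TridiagonalInverse.

Lemma subV_mul_le (R : realFieldType) (a b t : R) :
  0 < t -> 1 <= a -> a <= b -> t <= b -> (a^-1 - b^-1) * t <= b - a.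
Proof.
move=> t_gt0 a_ge1 le_ab le_tb.
have a_gt0 : 0 < a by lra.
have b_gt0 : 0 < b by lra.
rewrite -(ler_pM2r (mulr_gt0 a_gt0 b_gt0)).
have -> : (a^-1 - b^-1) * t * (a * b) = (b - a) * t by field; rewrite !lt0r_neq0.
by apply: ler_wpM2l; [lra|nra].
Qed.

Lemma harmonic_bound_step (R : realFieldType) (m e : R) : 1 <= m -> 0 <= e ->
  2 + e - (1 + m^-1 + m * e)^-1 <= 1 + (m + 1)^-1 + (m + 1) * e.
Proof.
move=> m_ge1 e_ge0; rewrite -subr_ge0.
have m_gt0 : 0 < m by lra.
have m1_gt0 : 0 < m + 1 by lra.
have D_gt0 : 0 < m + 1 + m * m * e by nra.
have -> : 1 + (m + 1)^-1 + (m + 1) * e - (2 + e - (1 + m^-1 + m * e)^-1)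
    = m * e * (2 * m + 1 + (m + 1) * m * m * e) / ((m + 1) * (m + 1 + m * m * e)).
  by field; rewrite !lt0r_neq0.
have mme_ge0 : 0 <= (m + 1) * m * m * e by rewrite !mulr_ge0 //; lra.
apply: divr_ge0; first by rewrite !mulr_ge0 //; lra.
by rewrite mulr_ge0 //; lra.
Qed.

Section Recursions.
Context {R : realType} {eps : R}.

Lemma p_auxS n : p_aux eps n.+1 = 2 + eps - (p_aux eps n)^-1.
Proof. by []. Qed.

Lemma p'_auxS n : p'_aux eps n.+1 = 2 + eps - (p'_aux eps n)^-1.
Proof. by []. Qed.

Lemma p_aux_cheb n : 0 <= eps -> p_aux eps n = cheb (2 + eps) n.+2 / cheb (2 + eps) n.+1.
Proof.
move=> eps_ge0; have c_ge2 : 2 <= 2 + eps by rewrite lerDl.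
elim: n => [|n IH]; first by rewrite chebSS cheb1 cheb0 divr1 /=; ring.
rewrite p_auxS IH invf_div [cheb _ n.+3]chebSS.
by field; rewrite chebS_neq0.
Qed.

Lemma p'_aux_cheb n : 0 <= eps ->
  p'_aux eps n = (cheb (2 + eps) n.+2 - cheb (2 + eps) n.+1)
                 / (cheb (2 + eps) n.+1 - cheb (2 + eps) n).
Proof.
move=> eps_ge0; have c_ge2 : 2 <= 2 + eps by rewrite lerDl.
elim: n => [|n IH]; first by rewrite chebSS cheb1 cheb0 /=; field.
rewrite p'_auxS IH invf_div [cheb _ n.+3]chebSS.
have -> : cheb (2 + eps) n = (2 + eps) * cheb (2 + eps) n.+1 - cheb (2 + eps) n.+2.
  by rewrite chebSS; ring.
by field; rewrite cheb_diff_neq0.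
Qed.

Lemma prod_p k : 0 <= eps -> \prod_(1 <= j < k.+1) p eps j = cheb (2 + eps) k.+1.
Proof.
move=> eps_ge0; have c_ge2 : 2 <= 2 + eps by rewrite lerDl.
elim: k => [|k IH]; first by rewrite big_geq // cheb1.
rewrite big_nat_recr //= IH /p p_aux_cheb //.
by field; rewrite chebS_neq0.
Qed.

Lemma prod_p' k : 0 <= eps ->
  \prod_(1 <= j < k.+1) p' eps j = cheb (2 + eps) k.+1 - cheb (2 + eps) k.
Proof.
move=> eps_ge0; have c_ge2 : 2 <= 2 + eps by rewrite lerDl.
elim: k => [|k IH]; first by rewrite big_geq // cheb1 cheb0 subr0.
rewrite big_nat_recr //= IH /p' p'_aux_cheb //.
by field; rewrite cheb_diff_neq0.
Qed.

Lemma prod_p'_prod_p k : 0 <= eps ->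
  \prod_(1 <= j < k.+2) p' eps j = (p eps k.+1 - 1) * \prod_(1 <= j < k.+1) p eps j.
Proof.
move=> eps_ge0; have c_ge2 : 2 <= 2 + eps by rewrite lerDl.
rewrite prod_p' // prod_p // /p (p_aux_cheb k eps_ge0).
by field; rewrite chebS_neq0.
Qed.

Lemma sqr_sqrt_disc : 0 <= eps ->
  Num.sqrt (eps + eps ^+ 2 / 4) * Num.sqrt (eps + eps ^+ 2 / 4) = eps + eps * eps / 4.
Proof. by move=> eps_ge0; rewrite -!expr2 sqr_sqrtr // addr_ge0 ?divr_ge0 ?sqr_ge0. Qed.

Lemma p_plus_lb : 0 <= eps -> 1 + Num.sqrt eps <= p_plus eps.
Proof.
move=> eps_ge0.
have : Num.sqrt eps <= Num.sqrt (eps + eps ^+ 2 / 4).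
  by apply: ler_wsqrtr; rewrite lerDl divr_ge0 ?sqr_ge0.
rewrite /p_plus; lra.
Qed.

Lemma p_plus_ub : 0 <= eps -> p_plus eps <= 1 + eps + Num.sqrt eps.
Proof.
move=> eps_ge0; have s_sq := sqr_sqrt_disc eps_ge0.
have s_ge0 := sqrtr_ge0 (eps + eps ^+ 2 / 4); have r_ge0 := sqrtr_ge0 eps.
have r_sq : Num.sqrt eps * Num.sqrt eps = eps by rewrite -expr2 sqr_sqrtr.
rewrite /p_plus; nra.
Qed.

Lemma p_plus_gt0 : 0 <= eps -> 0 < p_plus eps.
Proof. by move=> eps_ge0; have := p_plus_lb eps_ge0; have := sqrtr_ge0 eps; lra. Qed.

Lemma p_plus_fixed : 0 <= eps -> 2 + eps - (p_plus eps)^-1 = p_plus eps.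
Proof.
move=> eps_ge0; have s_sq := sqr_sqrt_disc eps_ge0.
apply: (mulIf (lt0r_neq0 (p_plus_gt0 eps_ge0))).
rewrite mulrBl mulVf ?lt0r_neq0 ?p_plus_gt0 // /p_plus; nra.
Qed.

Lemma p_aux_gt_p_plus n : 0 <= eps -> p_plus eps < p_aux eps n.
Proof.
move=> eps_ge0; have x_gt0 := p_plus_gt0 eps_ge0.
elim: n => [|n IH].
  have s_sq := sqr_sqrt_disc eps_ge0; have s_ge0 := sqrtr_ge0 (eps + eps ^+ 2 / 4).
  rewrite /= /p_plus; nra.
rewrite p_auxS -{1}(p_plus_fixed eps_ge0) ltrD2l ltrN2 ltf_pV2 ?posrE //.
exact: lt_trans IH.
Qed.

Lemma p_aux_decr n : 0 <= eps -> p_aux eps n.+1 < p_aux eps n.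
Proof.
move=> eps_ge0; have x_gt0 := p_plus_gt0 eps_ge0.
have p_gt0 k : 0 < p_aux eps k by exact: lt_trans (p_aux_gt_p_plus k eps_ge0).
elim: n => [|n IH].
  have : 0 < (2 + eps)^-1 by rewrite invr_gt0; lra.
  rewrite p_auxS /=; lra.
by rewrite p_auxS [X in _ < X]p_auxS ltrD2l ltrN2 ltf_pV2 ?posrE.
Qed.

Lemma p'_aux_ge1 n : 0 <= eps -> 1 <= p'_aux eps n.
Proof.
move=> eps_ge0; elim: n => [|n IH]; first by rewrite /= lerDl.
have : (p'_aux eps n)^-1 <= 1 by rewrite invf_le1 // (lt_le_trans ltr01).
rewrite p'_auxS; lra.
Qed.

Lemma p'_aux_le_p_plus n : 0 <= eps -> p'_aux eps n <= p_plus eps.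
Proof.
move=> eps_ge0; have x_gt0 := p_plus_gt0 eps_ge0.
elim: n => [|n IH]; rewrite -(p_plus_fixed eps_ge0).
  have : (p_plus eps)^-1 <= 1.
    by rewrite invf_le1 //; have := p_plus_lb eps_ge0; have := sqrtr_ge0 eps; lra.
  rewrite /=; lra.
rewrite p'_auxS lerD2l lerN2 lef_pV2 ?posrE ?IH //.
by have := p'_aux_ge1 n eps_ge0; lra.
Qed.

Lemma p'_aux_incr n : 0 <= eps -> p'_aux eps n <= p'_aux eps n.+1.
Proof.
move=> eps_ge0; have p'_gt0 k : 0 < p'_aux eps k by have := p'_aux_ge1 k eps_ge0; lra.
elim: n => [|n IH].
  have : (1 + eps)^-1 <= 1 by rewrite invf_le1 //; lra.
  rewrite p'_auxS /=; lra.
by rewrite p'_auxS [X in _ <= X]p'_auxS lerD2l lerN2 lef_pV2 ?posrE.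
Qed.

Lemma p_aux_ub n : 0 <= eps -> p_aux eps n <= 1 + (n.+1%:R)^-1 + n.+1%:R * eps.
Proof.
move=> eps_ge0; elim: n => [|n IH]; first by rewrite invr1 mul1r /=; lra.
have m_ge1 : 1 <= n.+1%:R :> R by rewrite ler1n.
have p_gt0 : 0 < p_aux eps n := lt_trans (p_plus_gt0 eps_ge0) (p_aux_gt_p_plus n eps_ge0).
rewrite -natr1 p_auxS; apply: le_trans; last exact: harmonic_bound_step m_ge1 eps_ge0.
by rewrite lerD2l lerN2 lef_pV2 ?posrE // (lt_le_trans p_gt0 IH).
Qed.

Lemma p_aux_sub_p_plus n : 0 <= eps ->
  (p_aux eps n - p_plus eps) * (1 + Num.sqrt eps) ^+ n <= 1 + Num.sqrt eps.
Proof.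
move=> eps_ge0; have r_ge0 := sqrtr_ge0 eps; have x_ge := p_plus_lb eps_ge0.
elim: n => [|n IH].
  have x_inv_le1 : (p_plus eps)^-1 <= 1 by rewrite invf_le1 ?p_plus_gt0 //; lra.
  by rewrite expr0 mulr1 /= -{1}(p_plus_fixed eps_ge0); lra.
have -> : p_aux eps n.+1 - p_plus eps = (p_plus eps)^-1 - (p_aux eps n)^-1.
  by rewrite p_auxS -{1}(p_plus_fixed eps_ge0); lra.
rewrite exprS mulrA; apply: le_trans IH; rewrite ler_wpM2r ?exprn_ge0 //; first lra.
have x_lt_p := p_aux_gt_p_plus n eps_ge0.
by apply: subV_mul_le; lra.
Qed.

Lemma p_plus_sub_p'_aux n : 0 <= eps ->
  (p_plus eps - p'_aux eps n) * (1 + Num.sqrt eps) ^+ n <= Num.sqrt eps.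
Proof.
move=> eps_ge0; have r_ge0 := sqrtr_ge0 eps; have x_ge := p_plus_lb eps_ge0.
elim: n => [|n IH]; first by rewrite expr0 mulr1 /=; have := p_plus_ub eps_ge0; lra.
have -> : p_plus eps - p'_aux eps n.+1 = (p'_aux eps n)^-1 - (p_plus eps)^-1.
  by rewrite p'_auxS -{1}(p_plus_fixed eps_ge0); lra.
rewrite exprS mulrA; apply: le_trans IH; rewrite ler_wpM2r ?exprn_ge0 //; first lra.
have p'_ge1 := p'_aux_ge1 n eps_ge0; have p'_le_x := p'_aux_le_p_plus n eps_ge0.
by apply: subV_mul_le; lra.
Qed.

Lemma p_aux_sub_p_plus_le m : 0 <= eps ->
  p_aux eps m.+1 - p_plus eps <= ((1 + Num.sqrt eps) ^+ m)^-1.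
Proof.
move=> eps_ge0; have t_gt0 : 0 < 1 + Num.sqrt eps by rewrite ltr_pwDl ?sqrtr_ge0.
rewrite -div1r ler_pdivlMr ?exprn_gt0 // -(ler_pM2r t_gt0) mul1r -mulrA -exprSr.
exact: p_aux_sub_p_plus.
Qed.

Lemma p_plus_sub_p'_aux_le m : 0 <= eps ->
  p_plus eps - p'_aux eps m.+1 <= Num.sqrt eps * ((1 + Num.sqrt eps) ^+ m)^-1.
Proof.
move=> eps_ge0; have t_ge1 : 1 <= 1 + Num.sqrt eps by rewrite lerDl sqrtr_ge0.
rewrite ler_pdivlMr ?exprn_gt0 ?(lt_le_trans ltr01) //.
apply: le_trans (p_plus_sub_p'_aux m.+1 eps_ge0).
rewrite ler_wpM2l ?subr_ge0 ?p'_aux_le_p_plus //.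
by rewrite exprSr ler_peMr ?exprn_ge0 ?(le_trans ler01).
Qed.

End Recursions.

Theorem lemma1 (R : realType) (eps : R) (heps0 : 0 <= eps) (heps1 : eps < 1) :
  (* 1. *)
  ((forall j : nat, (0 < j)%N ->
      1 <= p' eps j /\ p' eps j <= p_plus eps /\ p_plus eps < p eps j /\
      p eps j <= 1 + (j%:R)^-1 + j%:R * eps)
   /\ (forall j : nat, (0 < j)%N -> p eps j.+1 < p eps j)
   /\ (forall j : nat, (0 < j)%N -> p' eps j <= p' eps j.+1))
  (* 2. k ranges over 1..[l/2]; ordinal i corresponds to k = i+1 *)
  /\ (forall (l : nat) (i1 i2 : 'I_l), (i1 < i2)%N -> (i2 < l./2)%N ->
        (invmx (eps%:M + Mmat R l)) i1 i1 < (invmx (eps%:M + Mmat R l)) i2 i2)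
  (* 3. *)
  /\ (forall j : nat, (2 <= j)%N ->
        p eps j - p_plus eps <= ((1 + Num.sqrt eps) ^+ (j - 2))^-1 /\
        p_plus eps - p' eps j <= Num.sqrt eps * ((1 + Num.sqrt eps) ^+ (j - 2))^-1)
  (* 4. *)
  /\ (forall k : nat, (2 <= k)%N ->
        \prod_(1 <= j < k.+1) p' eps j = (p eps k - 1) * \prod_(1 <= j < k) p eps j).
Proof.
split; [split; [|split]|split; [|split]].
- case=> // n _; rewrite /p /p' /=.
  by rewrite p'_aux_ge1 ?p'_aux_le_p_plus ?p_aux_gt_p_plus ?p_aux_ub.
- by case=> // n _; exact: p_aux_decr.
- by case=> // n _; exact: p'_aux_incr.
- by move=> l i1 i2; exact: invmx_tridiag_diag_incr.
- case=> [|[|m]] // _; rewrite subn2 /= /p /p'.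
  by rewrite p_aux_sub_p_plus_le ?p_plus_sub_p'_aux_le.
- by case=> [|[|k]] // _; exact: prod_p'_prod_p.
Qed.
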